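(* Assume (A1)–(A2) below and let $C_1,C_2,C_3\ge0$ be constants depending only on the bounds in (A1)–(A2). Let $\varepsilon,\hat\varepsilon\in[0,\bar\varepsilon]$, $\gamma,\hat\gamma\in[\underline\gamma,\bar\gamma]$, and let $\hat w:[0,T]\times(0,\ell)\to[-\bar w,\bar w]$ with $\partial_\tau\hat w,\partial_x\hat w\in L^\infty(0,T;L^2(0,\ell))$. Define $\hat e_1=0$, $\hat e_2=(\varepsilon^2-\hat\varepsilon^2)(\partial_\tau\hat w+\tfrac12\partial_x|\hat w|^2)+(\gamma-\hat\gamma)|\hat w|\hat w$ and $\mathcal{P}(\hat{\boldsymbol e})=C_1\|\hat e_1\|_{L^2}^2+C_2\|\hat e_2\|_{L^2}^2+C_3\|\hat e_2\|_{L^{3/2}}^{3/2}$ (norms on $(0,\ell)$ at a fixed time). Then for all times $$\mathcal{P}(\hat{\boldsymbol e})\le\hat C_3'|\varepsilon^2-\hat\varepsilon^2|^{3/2}+\hat C_3''|\gamma-\hat\gamma|^{3/2},$$ with constants $\hat C_3',\hat C_3''$ depending only on the bounds in (A1)–(A2) and on $\|\partial_\tau\hat w\|_{L^\infty(0,T;L^2)}$ and $\|\partial_x\hat w\|_{L^\infty(0,T;L^2)}$.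
   Context: (A1): positive constants $\underline\rho\le\bar\rho$, $\bar w$, $\bar\varepsilon$, a smooth strictly convex $P$ with $\rho P''(\rho)\ge4\bar\varepsilon^2\bar w^2$ for $\underline\rho\le\rho\le\bar\rho$; the cross section satisfies $0<\underline a\le a\le\bar a$ on $(0,\ell)$; $|gz|\le\bar g\bar z$. (A2): $0\le\varepsilon,\hat\varepsilon\le\bar\varepsilon$, $0<\underline\gamma\le\gamma,\hat\gamma\le\bar\gamma$, and velocities are bounded by $\bar w$ in absolute value. Here $\hat{\boldsymbol e}=(\hat e_1,\hat e_2)$ is the residual obtained when a solution with parameters $(\hat\varepsilon,\hat\gamma)$ of the rescaled gas equations is inserted into the equations with parameters $(\varepsilon,\gamma)$. *)

From HB Require Import structures.
From mathcomp Require Import all_boot all_order all_algebra.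
From mathcomp Require Import all_classical all_reals all_analysis.
Set Implicit Arguments. Unset Strict Implicit. Unset Printing Implicit Defensive.
Import Order.TTheory GRing.Theory Num.Theory.
Local Open Scope classical_set_scope.
Local Open Scope ring_scope.

(* Residual components of the rescaled gas equations (pointwise in (t,x)).
   wt, wx stand for d_tau w and d_x w;  (1/2) d_x |w|^2 = w * d_x w. *)
Definition resid_e1 {R : realType} (w wt wx : R -> R -> R) (t x : R) : R := 0.

Definition resid_e2 {R : realType} (eps heps gam hgam : R)
  (w wt wx : R -> R -> R) (t x : R) : R :=
  (eps ^+ 2 - heps ^+ 2) * (wt t x + w t x * wx t x)
  + (gam - hgam) * `|w t x| * w t x.

Definition Lp_pow {R : realType} (l p : R) (f : R -> R) : \bar R :=
  (\int[@lebesgue_measure R]_(x in `]0%R, l[%classic) ((`|f x| `^ p)%:E))%E.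

Definition Pe {R : realType} (l C1 C2 C3 : R) (e1 e2 : R -> R) : \bar R :=
  (C1%:E * Lp_pow l 2 e1 + C2%:E * Lp_pow l 2 e2
   + C3%:E * Lp_pow l (3 / 2) e2)%E.

(* ACL description of the weak partial derivatives of w on [0,T] x (0,l):
   on a.e. horizontal / vertical line, w is the integral of wx / wt. *)
Definition weak_partials {R : realType} (T l : R) (w wt wx : R -> R -> R) : Prop :=
  {ae @lebesgue_measure R, forall t, t \in `]0, T[ ->
     measurable_fun `]0, l[ (wx t) /\
     (forall x y, x \in `]0, l[ -> y \in `]0, l[ -> x <= y ->
        (w t y - w t x)%:E = (\int[@lebesgue_measure R]_(s in `[x, y]%classic) (wx t s)%:E)%E)}
  /\
  {ae @lebesgue_measure R, forall x, x \in `]0, l[ ->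
     measurable_fun `[0, T] (fun s => wt s x) /\
     (forall s u, s \in `[0, T] -> u \in `[0, T] -> s <= u ->
        (w u x - w s x)%:E = (\int[@lebesgue_measure R]_(r in `[s, u]%classic) (wt r x)%:E)%E)}.

From HB Require Import structures.
From mathcomp Require Import all_boot all_order all_algebra.
From mathcomp Require Import all_classical all_reals all_analysis.
From mathcomp Require Import measurable_realfun ring lra.
Set Implicit Arguments. Unset Strict Implicit. Unset Printing Implicit Defensive.
Import Order.TTheory GRing.Theory Num.Theory.
Local Open Scope classical_set_scope.
Local Open Scope ring_scope.

(** The residual [e2] is pointwise bounded by [a (|w_t| + wbar |w_x|) + b wbar^2] with
    [a = |eps^2 - heps^2| <= epsbar^2] and [b = |gam - hgam| <= gamhi].  For every
    exponent [3/2 <= p <= 2] its [p]-th power is then bounded by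
    [KA a^(3/2) (1 + |w_t|^2 + |w_x|^2) + KB b^(3/2)]: split the sum with
    [(u + v)^p <= 2^p (u^p + v^p)], trade the surplus power [a^(p - 3/2)] (resp. [b^(p - 3/2)])
    for a constant since [a] and [b] are bounded, and use [s^p <= 1 + s^2].  Integrating
    over [(0, l)] against the [L^2] bounds on [w_t], [w_x] handles both the [L^2] and the
    [L^(3/2)] terms of [P]; [e1 = 0] contributes nothing. *)

Section PowerBounds.
Variable R : realType.

Lemma powR_le1D (x q r : R) : 0 <= x -> 0 <= q -> q <= r -> x `^ q <= 1 + x `^ r.
Proof.
move=> x0 q0 qr; have xr0 := powR_ge0 x r.
case: (lerP x 1) => [x1|/ltW x1].
- have : x `^ q <= 1 `^ q by apply: ge0_ler_powR; rewrite ?nnegrE.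
  rewrite powR1; lra.
- have := ler_powR x1 qr; lra.
Qed.

Lemma powRD_le (u v p : R) : 0 <= u -> 0 <= v -> 0 <= p ->
  (u + v) `^ p <= 2 `^ p * (u `^ p + v `^ p).
Proof.
move=> u0 v0 p0; have up0 := powR_ge0 u p; have vp0 := powR_ge0 v p.
wlog uv : u v u0 v0 up0 vp0 / u <= v.
  move=> H; case: (lerP u v) => [|/ltW]; first exact: H.
  by rewrite addrC [u `^ p + _]addrC; apply: H.
have : (u + v) `^ p <= (2 * v) `^ p by apply: ge0_ler_powR => //; rewrite ?nnegrE; lra.
rewrite powRM //; have := powR_ge0 2 p; nra.
Qed.

Lemma powR_le_mul_powR (x M q p : R) : 0 <= x -> x <= M -> 0 < q -> q <= p -> p <= q + 1 ->
  x `^ p <= (1 + M) * x `^ q.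
Proof.
move=> x0 xM q0 qp pq.
have -> : x `^ p = x `^ (p - q) * x `^ q.
  by rewrite -powRD ?subrK //; apply/implyP => /eqP p0; lra.
apply: ler_wpM2r; first exact: powR_ge0.
have : x `^ (p - q) <= 1 + x `^ 1 by apply: powR_le1D => //; lra.
rewrite powRr1 //; lra.
Qed.

Lemma normB_le (x y M : R) : 0 <= x <= M -> 0 <= y <= M -> `|x - y| <= M.
Proof. by move=> /andP[x0 xM] /andP[y0 yM]; rewrite ler_norml; apply/andP; split; lra. Qed.

Lemma normB_sqr_le (x y M : R) : 0 <= x <= M -> 0 <= y <= M ->
  `|x ^+ 2 - y ^+ 2| <= M ^+ 2.
Proof.
have sqr_in z : 0 <= z <= M -> 0 <= z ^+ 2 <= M ^+ 2.
  by case/andP=> z0 zM; rewrite sqr_ge0 /= ler_pXn2r ?nnegrE //; lra.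
by move=> /sqr_in xM /sqr_in yM; apply: normB_le.
Qed.

Lemma sqr_addr_mul_le (x y M : R) : (x + M * y) ^+ 2 <= 2 * (1 + M ^+ 2) * (x ^+ 2 + y ^+ 2).
Proof. have := sqr_ge0 (x - M * y); have := sqr_ge0 (M * x); nra. Qed.

Lemma powR_affine_le (a b A B W ea gb E p : R) :
  0 <= a <= ea -> 0 <= b <= gb -> 0 <= A -> 0 <= B -> 0 <= W -> 3 / 2 <= p <= 2 ->
  0 <= E <= a * (A + W * B) + b * W ^+ 2 ->
  E `^ p <= 8 * (1 + ea) * (1 + W ^+ 2) * a `^ (3 / 2) * (1 + A `^ 2 + B `^ 2)
            + 4 * (1 + gb) * (1 + W ^+ 4) * b `^ (3 / 2).
Proof.
move=> /andP[a0 aea] /andP[b0 bgb] A0 B0 W0 /andP[p32 p2] /andP[E0 Ele].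
set g := A + W * B; have g0 : 0 <= g by rewrite /g; nra.
have p0 : 0 <= p by lra.
have W20 : 0 <= W ^+ 2 := sqr_ge0 W.
have hE : E `^ p <= 2 `^ p * ((a * g) `^ p + (b * W ^+ 2) `^ p).
  apply: le_trans (powRD_le (mulr_ge0 a0 g0) (mulr_ge0 b0 W20) p0).
  by apply: ge0_ler_powR; rewrite ?nnegrE ?addr_ge0 ?mulr_ge0.
have h2 : 2 `^ p <= 4.
  have -> : 4 = 2 `^ 2%:R :> R by rewrite powR_mulrn // expr2 -natrM.
  by apply: ler_powR; lra.
have ha : a `^ p <= (1 + ea) * a `^ (3 / 2).
  by apply: powR_le_mul_powR => //; lra.
have hb : b `^ p <= (1 + gb) * b `^ (3 / 2).
  by apply: powR_le_mul_powR => //; lra.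
have hg : g `^ p <= 2 * (1 + W ^+ 2) * (1 + A ^+ 2 + B ^+ 2).
  apply: le_trans (_ : 1 + g ^+ 2 <= _).
    by rewrite -(powR_mulrn 2 g0); apply: powR_le1D => //; lra.
  by rewrite /g; have := sqr_addr_mul_le A B W; have := sqr_ge0 W; lra.
have hW : (W ^+ 2) `^ p <= 1 + W ^+ 4.
  by rewrite (exprM W 2 2) -(powR_mulrn 2 W20); apply: powR_le1D => //; lra.
rewrite !powR_mulrn // (le_trans hE) // (powRM p a0 g0) (powRM p b0 W20).
have -> : 8 * (1 + ea) * (1 + W ^+ 2) * a `^ (3 / 2) * (1 + A ^+ 2 + B ^+ 2)
          + 4 * (1 + gb) * (1 + W ^+ 4) * b `^ (3 / 2)
        = 4 * ((1 + ea) * a `^ (3 / 2) * (2 * (1 + W ^+ 2) * (1 + A ^+ 2 + B ^+ 2))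
               + (1 + gb) * b `^ (3 / 2) * (1 + W ^+ 4)) by ring.
apply: ler_pM h2 (lerD _ _); rewrite ?addr_ge0 ?mulr_ge0 ?powR_ge0 //.
- exact: ler_pM (powR_ge0 _ _) (powR_ge0 _ _) ha hg.
- exact: ler_pM (powR_ge0 _ _) (powR_ge0 _ _) hb hW.
Qed.
End PowerBounds.

Section Residual.
Variables (R : realType) (eps heps gam hgam : R) (w wt wx : R -> R -> R).

Lemma norm_resid_e2_le (W t x : R) : `|w t x| <= W ->
  `|resid_e2 eps heps gam hgam w wt wx t x|
    <= `|eps ^+ 2 - heps ^+ 2| * (`|wt t x| + W * `|wx t x|) + `|gam - hgam| * W ^+ 2.
Proof.
move=> wW; have W0 : 0 <= W := le_trans (normr_ge0 _) wW.
apply: le_trans (ler_normD _ _) _; rewrite !normrM normr_id.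
apply: lerD.
- rewrite ler_wpM2l //; apply: le_trans (ler_normD _ _) _.
  by rewrite normrM lerD2l ler_wpM2r.
- by rewrite -mulrA ler_wpM2l // expr2 ler_pM.
Qed.

Lemma powR_resid_e2_le (W ea gb p t x : R) :
  0 <= W -> `|w t x| <= W ->
  `|eps ^+ 2 - heps ^+ 2| <= ea -> `|gam - hgam| <= gb -> 3 / 2 <= p <= 2 ->
  `|resid_e2 eps heps gam hgam w wt wx t x| `^ p
    <= 8 * (1 + ea) * (1 + W ^+ 2) * `|eps ^+ 2 - heps ^+ 2| `^ (3 / 2)
         * (1 + `|wt t x| `^ 2 + `|wx t x| `^ 2)
       + 4 * (1 + gb) * (1 + W ^+ 4) * `|gam - hgam| `^ (3 / 2).
Proof.
move=> W0 wW hea hgb hp.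
by apply: powR_affine_le; rewrite ?normr_ge0 ?norm_resid_e2_le.
Qed.

Lemma measurable_resid_e2 (D : set R) (t : R) :
  measurable_fun D (w t) -> measurable_fun D (wt t) -> measurable_fun D (wx t) ->
  measurable_fun D (resid_e2 eps heps gam hgam w wt wx t).
Proof.
move=> mw mwt mwx; apply: measurable_funD.
- apply: measurable_funM; first exact: measurable_cst.
  by apply: measurable_funD => //; apply: measurable_funM.
- apply: measurable_funM => //; apply: measurable_funM; first exact: measurable_cst.
  exact: measurableT_comp (@normr_measurable R setT) mw.
Qed.
End Residual.

Section LpPow.
Variables (R : realType) (l : R).
Local Notation mu := (@lebesgue_measure R).

Lemma measurable_powR_norm (D : set R) (p : R) (f : R -> R) :
  measurable_fun D f -> measurable_fun D (fun x => `|f x| `^ p).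
Proof.
move=> mf; apply: measurableT_comp (measurable_powR p) _.
exact: measurableT_comp (@normr_measurable R setT) mf.
Qed.

Lemma Lp_pow_cst0 (p : R) : p != 0 -> Lp_pow l p (fun=> 0) = 0%E.
Proof. by move=> p0; rewrite /Lp_pow normr0 powR0 // integral0. Qed.

Lemma integral_affine_Lp_pow (c1 c3 : R) (g h : R -> R) : 0 < l ->
  0 <= c1 -> 0 <= c3 -> measurable_fun `]0, l[ g -> measurable_fun `]0, l[ h ->
  (\int[mu]_(x in `]0%R, l[%classic) (c1 * (1 + `|g x| `^ 2 + `|h x| `^ 2) + c3)%R%:E
    = ((c1 + c3) * l)%:E + (c1%:E * Lp_pow l 2 g + c1%:E * Lp_pow l 2 h))%E.
Proof.
move=> l0 c10 c30 mg mh.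
have mI : measurable (`]0, l[%classic : set R) by exact: measurable_itv.
have mP (u : R -> R) : measurable_fun `]0, l[ u ->
    measurable_fun `]0, l[ (fun x => (`|u x| `^ 2)%:E).
  by move=> mu_u; apply/measurable_EFinP; apply: measurable_powR_norm.
have mZ (u : R -> R) : measurable_fun `]0, l[ u ->
    measurable_fun `]0, l[ (fun x => c1%:E * (`|u x| `^ 2)%:E)%E.
  by move=> mu_u; apply: emeasurable_funM; [exact: measurable_cst | exact: mP].
have pZ (u : R -> R) x : (0 <= c1%:E * (`|u x| `^ 2)%:E)%E.
  by rewrite mule_ge0 // lee_fin powR_ge0.
have IZ (u : R -> R) : measurable_fun `]0, l[ u ->
    (\int[mu]_(x in `]0%R, l[%classic) (c1%:E * (`|u x| `^ 2)%:E) = c1%:E * Lp_pow l 2 u)%E.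
  by move=> mu_u; rewrite ge0_integralZl ?lee_fin //; exact: mP.
transitivity (\int[mu]_(x in `]0%R, l[%classic)
    ((c1 + c3)%:E + (c1%:E * (`|g x| `^ 2)%:E + c1%:E * (`|h x| `^ 2)%:E)))%E.
  by apply: eq_integral => x _; rewrite -!EFinM -!EFinD; congr (_%:E); ring.
rewrite ge0_integralD //; first last.
- by apply: emeasurable_funD; apply: mZ.
- by move=> x _; rewrite adde_ge0.
- by move=> x _; rewrite lee_fin addr_ge0.
rewrite ge0_integralD // ?IZ //; try exact: mZ.
have := integral_cst mu mI (c1 + c3)%:E; rewrite /cst => ->.
by rewrite /= lebesgue_measure_itv /= lte_fin l0 oppr0 adde0 -EFinM.
Qed.

Lemma Lp_pow_le_affine (p c1 c3 Mg Mh : R) (f g h : R -> R) : 0 < l ->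
  0 <= c1 -> 0 <= c3 ->
  measurable_fun `]0, l[ f -> measurable_fun `]0, l[ g -> measurable_fun `]0, l[ h ->
  (Lp_pow l 2 g <= Mg%:E)%E -> (Lp_pow l 2 h <= Mh%:E)%E ->
  (forall x, x \in `]0, l[ -> `|f x| `^ p <= c1 * (1 + `|g x| `^ 2 + `|h x| `^ 2) + c3) ->
  (Lp_pow l p f <= (c1 * (l + Mg + Mh) + c3 * l)%:E)%E.
Proof.
move=> l0 c10 c30 mf mg mh Ig Ih fle.
pose F x := (c1 * (1 + `|g x| `^ 2 + `|h x| `^ 2) + c3)%:E.
apply: (le_trans (@ge0_le_integral _ _ _ mu _ (measurable_itv _) _ F _ _ _ _)).
- by move=> x _; rewrite lee_fin powR_ge0.
- by apply/measurable_EFinP; apply: measurable_powR_norm.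
- apply/measurable_EFinP/measurable_funD; last exact: measurable_cst.
  apply: measurable_funM; first exact: measurable_cst.
  apply: measurable_funD; first apply: measurable_funD; first exact: measurable_cst.
  + exact: measurable_powR_norm.
  + exact: measurable_powR_norm.
- by move=> x xI; rewrite lee_fin fle.
rewrite integral_affine_Lp_pow //.
have c1E : (0 <= c1%:E)%E by rewrite lee_fin.
apply: le_trans (leeD (lexx _) (leeD (lee_wpmul2l c1E Ig) (lee_wpmul2l c1E Ih))) _.
by rewrite -!EFinM -!EFinD lee_fin; lra.
Qed.
End LpPow.

Theorem corollary4p6 (R : realType)
  (l wbar epsbar gamlo gamhi C1 C2 C3 Mt Mx : R) :
  0 < l -> 0 < wbar -> 0 < epsbar -> 0 < gamlo -> gamlo <= gamhi ->
  0 <= C1 -> 0 <= C2 -> 0 <= C3 -> 0 <= Mt -> 0 <= Mx ->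
  exists C3' C3'' : R, 0 <= C3' /\ 0 <= C3'' /\
  forall (T eps heps gam hgam : R) (w wt wx : R -> R -> R),
    0 < T ->
    0 <= eps <= epsbar -> 0 <= heps <= epsbar ->
    gamlo <= gam <= gamhi -> gamlo <= hgam <= gamhi ->
    (forall t x, t \in `[0, T] -> x \in `]0, l[ -> `|w t x| <= wbar) ->
    weak_partials T l w wt wx ->
    (* d_tau w, d_x w in L^oo(0,T; L^2(0,l)) with norms <= Mt, Mx *)
    {ae @lebesgue_measure R, forall t, t \in `[0, T] ->
       measurable_fun `]0, l[ (w t) /\
       measurable_fun `]0, l[ (wt t) /\ measurable_fun `]0, l[ (wx t) /\
       (Lp_pow l 2 (wt t) <= (Mt ^+ 2)%:E)%E /\
       (Lp_pow l 2 (wx t) <= (Mx ^+ 2)%:E)%E} ->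
    {ae @lebesgue_measure R, forall t, t \in `[0, T] ->
       (Pe l C1 C2 C3 (resid_e1 w wt wx t)
                      (resid_e2 eps heps gam hgam w wt wx t)
        <= (C3' * `|eps ^+ 2 - heps ^+ 2| `^ (3 / 2)
            + C3'' * `|gam - hgam| `^ (3 / 2))%:E)%E}.
Proof.
move=> l0 wbar0 _ gamlo0 gamlohi _ C20 C30 _ _.
pose KA := 8 * (1 + epsbar ^+ 2) * (1 + wbar ^+ 2).
pose KB := 4 * (1 + gamhi) * (1 + wbar ^+ 4).
exists ((C2 + C3) * (KA * (l + Mt ^+ 2 + Mx ^+ 2))), ((C2 + C3) * (KB * l)).
have l_ge0 := ltW l0; have wbar_ge0 := ltW wbar0; have gamhi0 : 0 <= gamhi by lra.
have KA0 : 0 <= KA by rewrite /KA !mulr_ge0 ?addr_ge0 ?sqr_ge0.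
have KB0 : 0 <= KB by rewrite /KB !mulr_ge0 ?addr_ge0 ?exprn_ge0.
split; [|split]; rewrite ?mulr_ge0 ?addr_ge0 ?sqr_ge0 ?exprn_ge0 //.
move=> T eps heps gam hgam w wt wx _ heps_in hheps_in hgam_in hhgam_in wle _.
apply: filterS; first exact: (ae_filter_ringOfSetsType (@lebesgue_measure R)).
move=> t Ht tT; have [mw [mwt [mwx [It Ix]]]] := Ht tT.
set a := `|eps ^+ 2 - heps ^+ 2|; set b := `|gam - hgam|.
have ha : a <= epsbar ^+ 2 by apply: normB_sqr_le.
have hb : b <= gamhi by apply: normB_le; apply/andP; lra.
have Lp p : 3 / 2 <= p <= 2 -> (Lp_pow l p (resid_e2 eps heps gam hgam w wt wx t)
    <= (KA * a `^ (3 / 2) * (l + Mt ^+ 2 + Mx ^+ 2) + KB * b `^ (3 / 2) * l)%:E)%E.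
  move=> hp; apply: (Lp_pow_le_affine (g := wt t) (h := wx t)) => //.
  - exact: mulr_ge0 KA0 (powR_ge0 _ _).
  - exact: mulr_ge0 KB0 (powR_ge0 _ _).
  - exact: measurable_resid_e2.
  - by move=> x xI; apply: powR_resid_e2_le; rewrite ?wle.
rewrite /Pe /resid_e1 Lp_pow_cst0 // mule0 add0e.
have [C2E C3E] : (0 <= C2%:E /\ 0 <= C3%:E)%E by rewrite !lee_fin.
apply: le_trans (leeD (lee_wpmul2l C2E (Lp 2 _)) (lee_wpmul2l C3E (Lp (3 / 2) _))) _;
  try by apply/andP; lra.
by rewrite -!EFinM -EFinD lee_fin; lra.
Qed.
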